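(* Let $(\mathcal{A},\circ)$ be a Novikov algebra and $\alpha$ an algebra endomorphism of $(\mathcal{A},\circ)$. Define $x\circ_\alpha y=\alpha(x)\circ\alpha(y)$ and $[x,y]^-_\alpha=\alpha(x\circ y)-\alpha(y\circ x)$ for $x,y\in\mathcal{A}$. Then $(\mathcal{A},[\cdot,\cdot]^-_\alpha,\circ_\alpha,\alpha)$ is a Hom Gel'fand-Dorfman bialgebra.
   Context: All vector spaces are over $\mathbb{C}$. A Novikov algebra is a vector space $\mathcal{A}$ with a bilinear operation $\circ$ such that $(x\circ y)\circ z=(x\circ z)\circ y$ and $(x,y,z)=(y,x,z)$ for all $x,y,z$, where $(x,y,z)=(x\circ y)\circ z-x\circ(y\circ z)$. A Hom-Novikov algebra is a vector space with a bilinear operation $\circ$ and a linear endomorphism $\alpha$ such that $(x\circ y)\circ\alpha(z)-\alpha(x)\circ(y\circ z)=(y\circ x)\circ\alpha(z)-\alpha(y)\circ(x\circ z)$ and $(x\circ y)\circ\alpha(z)=(x\circ z)\circ\alpha(y)$ for all $x,y,z$. A Hom-Lie algebra is a vector space with a bilinear map $[\cdot,\cdot]$ and a linear map $\alpha$ with $[x,y]=-[y,x]$ and $[[x,y],\alpha(z)]+[[y,z],\alpha(x)]+[[z,x],\alpha(y)]=0$. A Hom Gel'fand-Dorfman bialgebra is a vector space $\mathcal{A}$ with a linear endomorphism $\alpha$ and two bilinear operations $[\cdot,\cdot],\circ$ such that $(\mathcal{A},[\cdot,\cdot],\alpha)$ is a Hom-Lie algebra, $(\mathcal{A},\circ,\alpha)$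 is a Hom-Novikov algebra, and $[x\circ y,\alpha(z)]-[x\circ z,\alpha(y)]+[x,y]\circ\alpha(z)-[x,z]\circ\alpha(y)-\alpha(x)\circ[y,z]=0$ for all $x,y,z$. *)

From HB Require Import structures.
From mathcomp Require Import all_boot all_order all_algebra.
From mathcomp Require Import complex.
From mathcomp Require Import Rstruct.
Set Implicit Arguments. Unset Strict Implicit. Unset Printing Implicit Defensive.
Import GRing.Theory.
Local Open Scope ring_scope.

Definition CC : Type := (Rdefinitions.R)[i].

Section Defs.
Variable K : nzRingType.
Variable V : lmodType K.

Definition bilinear_op (m : V -> V -> V) : Prop :=
  (forall y, linear (fun x => m x y)) /\ (forall x, linear (fun y => m x y)).

Definition assoc (m : V -> V -> V) x y z := m (m x y) z - m x (m y z).

Definition is_novikov (m : V -> V -> V) : Prop :=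
  bilinear_op m /\
  (forall x y z, m (m x y) z = m (m x z) y) /\
  (forall x y z, assoc m x y z = assoc m y x z).

Definition is_hom_novikov (m : V -> V -> V) (a : V -> V) : Prop :=
  bilinear_op m /\ linear a /\
  (forall x y z, m (m x y) (a z) - m (a x) (m y z)
                 = m (m y x) (a z) - m (a y) (m x z)) /\
  (forall x y z, m (m x y) (a z) = m (m x z) (a y)).

Definition is_hom_lie (b : V -> V -> V) (a : V -> V) : Prop :=
  bilinear_op b /\ linear a /\
  (forall x y, b x y = - b y x) /\
  (forall x y z, b (b x y) (a z) + b (b y z) (a x) + b (b z x) (a y) = 0).

Definition is_hom_GD_bialgebra (b m : V -> V -> V) (a : V -> V) : Prop :=
  is_hom_lie b a /\ is_hom_novikov m a /\
  (forall x y z, b (m x y) (a z) - b (m x z) (a y) + m (b x y) (a z)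
                 - m (b x z) (a y) - m (a x) (b y z) = 0).

Definition is_endomorphism (m : V -> V -> V) (a : V -> V) : Prop :=
  linear a /\ forall x y, a (m x y) = m (a x) (a y).

Definition twist_mul (m : V -> V -> V) (a : V -> V) x y := m (a x) (a y).
Definition twist_minus_bracket (m : V -> V -> V) (a : V -> V) x y :=
  a (m x y) - a (m y x).
End Defs.

(* Left-symmetry makes the commutator of a Novikov algebra a Lie bracket, and together
   with right-commutativity it yields the Gel'fand-Dorfman compatibility identity, so
   (A, [.,.], o) is a Gel'fand-Dorfman bialgebra.  An endomorphism a of both operations
   then Yau-twists it: composing both operations with a gives a Hom Gel'fand-Dorfman
   bialgebra, because in every defining identity of the twisted structure a can be pushed
   inwards until the identity becomes the untwisted one at (a (a x), a (a y), a (a z)).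
   For a Novikov endomorphism the operations of the statement are exactly these twists. *)

From mathcomp Require Import all_boot all_order all_algebra.
From mathcomp Require Import complex Rstruct.
From Stdlib Require Import FunctionalExtensionality.
Import GRing.Theory.
Local Open Scope ring_scope.
Set Implicit Arguments. Unset Strict Implicit.

Section LinearMaps.
Variable K : nzRingType.
Implicit Types U V W : lmodType K.

Lemma linfD U W (f : U -> W) : linear f -> {morph f : u v / u + v}.
Proof. by move=> f_lin u v; rewrite -[u]scale1r f_lin !scale1r. Qed.

Lemma linf0 U W (f : U -> W) : linear f -> f 0 = 0.
Proof. by move=> f_lin; apply: (addrI (f 0)); rewrite -linfD // !addr0. Qed.

Lemma linfN U W (f : U -> W) : linear f -> {morph f : u / - u}.
Proof.
move=> f_lin u; apply/eqP; rewrite -subr_eq0 opprK -linfD //.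
by rewrite addNr linf0.
Qed.

Lemma linfB U W (f : U -> W) : linear f -> {morph f : u v / u - v}.
Proof. by move=> f_lin u v; rewrite linfD // linfN. Qed.

Lemma linear_comp U V W (f : V -> W) (g : U -> V) :
  linear f -> linear g -> linear (f \o g).
Proof. by move=> f_lin g_lin c u v /=; rewrite g_lin f_lin. Qed.

Lemma linear_sub U W (f g : U -> W) : linear f -> linear g -> linear (f \- g).
Proof.
move=> f_lin g_lin c u v /=; rewrite f_lin g_lin scalerBr.
by rewrite opprD !addrA (addrAC _ (f v)).
Qed.

End LinearMaps.

Section YauTwist.
Variables (K : nzRingType) (V : lmodType K).
Implicit Types (b m : V -> V -> V) (a : V -> V).

Definition yau_twist m a x y := a (m x y).

Lemma bilinear_yau_twist m a :
  bilinear_op m -> linear a -> bilinear_op (yau_twist m a).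
Proof.
move=> [ml mr] a_lin.
by split=> [y|x]; [exact: linear_comp a_lin (ml y) | exact: linear_comp a_lin (mr x)].
Qed.

Lemma hom_GD_bialgebra_yau_twist b m a :
  is_hom_GD_bialgebra b m id -> is_endomorphism b a -> is_endomorphism m a ->
  is_hom_GD_bialgebra (yau_twist b a) (yau_twist m a) a.
Proof.
move=> [[b_bil [_ [b_anti b_jacobi]]] [[m_bil [_ [m_lsym m_rcomm]]] compat]].
move=> [a_lin a_b] [_ a_m]; rewrite /is_hom_GD_bialgebra /yau_twist.
split; [|split].
- split; first exact: bilinear_yau_twist.
  split=> //; split=> [x y|x y z]; rewrite !a_b ?a_m; [exact: b_anti|].
  exact: b_jacobi (a (a x)) (a (a y)) (a (a z)).
- split; first exact: bilinear_yau_twist.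
  split=> //; split=> x y z; rewrite !a_m.
    exact: m_lsym (a (a x)) (a (a y)) (a (a z)).
  exact: m_rcomm (a (a x)) (a (a y)) (a (a z)).
- move=> x y z; rewrite !(a_b, a_m).
  exact: compat (a (a x)) (a (a y)) (a (a z)).
Qed.

End YauTwist.

Section NovikovCommutator.
Variables (K : nzRingType) (V : lmodType K) (m : V -> V -> V).
Hypothesis m_bilinear : bilinear_op m.

Definition commutator x y := m x y - m y x.

Lemma mulBl x y z : m (x - y) z = m x z - m y z.
Proof. by case: m_bilinear => ml _; apply: linfB (ml z) x y. Qed.

Lemma mulBr x y z : m x (y - z) = m x y - m x z.
Proof. by case: m_bilinear => _ mr; apply: linfB (mr x) y z. Qed.

Lemma bilinear_commutator : bilinear_op commutator.
Proof.
case: m_bilinear => ml mr.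
by split=> [y|x]; [exact: linear_sub (ml y) (mr y) | exact: linear_sub (mr x) (ml x)].
Qed.

Lemma commutator_endomorphism a :
  is_endomorphism m a -> is_endomorphism commutator a.
Proof. by move=> [a_lin a_m]; split=> // x y; rewrite /commutator linfB // !a_m. Qed.

Section LeftSymmetric.
Hypothesis m_lsym : forall x y z, assoc m x y z = assoc m y x z.

Lemma mul_commutatorl x y z : m (commutator x y) z = m x (m y z) - m y (m x z).
Proof.
have lsym := m_lsym x y z; rewrite /assoc in lsym.
rewrite /commutator mulBl -[m (m x y) z](subrK (m x (m y z))) lsym.
by rewrite addrAC (addrAC (m (m y x) z)) subrr add0r addrC.
Qed.

Lemma commutator_jacobi x y z :
  commutator (commutator x y) z + commutator (commutator y z) x
    + commutator (commutator z x) y = 0.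
Proof.
rewrite {1 3 5}/commutator !mul_commutatorl /commutator !mulBr !opprB !addrA.
(* each of the six words u (v w), {u, v, w} = {x, y, z}, occurs once with each sign *)
rewrite (ACl ((1*8)*(11*2)*(3*6)*(9*4)*(5*12)*(7*10))%AC) /=.
by rewrite !subrr !addr0.
Qed.

Hypothesis m_rcomm : forall x y z, m (m x y) z = m (m x z) y.

Lemma commutator_GD_compat x y z :
  commutator (m x y) z - commutator (m x z) y + m (commutator x y) z
    - m (commutator x z) y - m x (commutator y z) = 0.
Proof.
rewrite !mul_commutatorl /commutator mulBr m_rcomm !opprB !addrA.
(* with (x y) z traded for (x z) y, the ten remaining terms cancel in pairs *)
rewrite (ACl ((1*4)*(7*2)*(3*6)*(5*10)*(9*8))%AC) /=.
by rewrite !subrr !addr0.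
Qed.

End LeftSymmetric.
End NovikovCommutator.

Section NovikovTwist.
Variables (K : nzRingType) (V : lmodType K) (m : V -> V -> V).

Lemma novikov_GD_bialgebra : is_novikov m -> is_hom_GD_bialgebra (commutator m) m id.
Proof.
move=> [m_bil [m_rcomm m_lsym]]; split; [|split].
- split; first exact: bilinear_commutator.
  split=> //; split=> [x y|x y z]; first by rewrite /commutator opprB.
  exact: commutator_jacobi.
- by split.
- exact: commutator_GD_compat.
Qed.

Lemma twist_mul_yau a : is_endomorphism m a -> twist_mul m a = yau_twist m a.
Proof.
by move=> [_ a_m]; do 2!apply: functional_extensionality => ?; rewrite /yau_twist a_m.
Qed.

Lemma twist_minus_bracket_yau a :
  linear a -> twist_minus_bracket m a = yau_twist (commutator m) a.
Proof.
by move=> a_lin; do 2!apply: functional_extensionality => ?; rewrite /yau_twist linfB.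
Qed.

End NovikovTwist.

Theorem corollary3p4 (V : lmodType CC) (m : V -> V -> V) (a : V -> V) :
  is_novikov m -> is_endomorphism m a ->
  is_hom_GD_bialgebra (twist_minus_bracket m a) (twist_mul m a) a.
Proof.
move=> m_novikov m_endo; have [a_lin _] := m_endo.
rewrite twist_mul_yau // twist_minus_bracket_yau //.
apply: hom_GD_bialgebra_yau_twist (m_endo).
- exact: novikov_GD_bialgebra.
- exact: commutator_endomorphism m_endo.
Qed.
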